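(* Let $s,n,k$ be positive integers, $\Gamma=\mathbb{Z}_{sn}\mathbin{\mathrm{wr}}\mathbb{Z}^k$, $G=\mathbb{Z}_n\mathbin{\mathrm{wr}}\mathbb{Z}^k$, with torsion subgroups $\Sigma$ and $\Omega$ respectively, and let $\Pi\colon\Gamma\to G$ and $\pi\colon\Sigma\to\Omega$ be the coefficient-reduction maps (defined in the context). Let $\varphi$ be an automorphism of $\Gamma$. Then there exists an automorphism $\psi$ of $G$ such that $\Pi\circ\varphi=\psi\circ\Pi$, $\pi\circ\varphi'=\psi'\circ\pi$ and $\overline{\varphi}=\overline{\psi}$. Moreover, $R(\varphi)\ge R(\psi)$.
   Context: For a positive integer $m$, $\mathbb{Z}_m\mathbin{\mathrm{wr}}\mathbb{Z}^k=\bigoplus_{x\in\mathbb{Z}^k}(\mathbb{Z}_m)_x\rtimes_\alpha\mathbb{Z}^k$ is the restricted wreath product, where $\alpha(z)$ maps $(\mathbb{Z}_m)_x$ onto $(\mathbb{Z}_m)_{z+x}$; its torsion subgroup is $\bigoplus_x(\mathbb{Z}_m)_x$, which is characteristic. For an automorphism $\varphi$, $\varphi'$ denotes its restriction to the torsion subgroup and $\overline{\varphi}$ the induced automorphism of the quotient $\mathbb{Z}^k$. With $\Delta_x,\delta_x$ the generators of $(\mathbb{Z}_{sn})_x$, $(\mathbb{Z}_n)_x$: $\pi(\sum_i k_i\Delta_{x_i})=\sum_i (k_i\bmod n)\delta_{x_i}$ and $\Pi(\sigma,z)=(\pi(\sigma),z)$. Two elements $g_1,g_2$ are $\varphi$-twisted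 conjugate if $g_1=hg_2\varphi(h^{-1})$ for some $h$; $R(\varphi)$ is the number of such classes (Reidemeister number). *)

From HB Require Import structures.
From mathcomp Require Import all_boot all_order all_algebra.
From mathcomp Require Import finmap.
From mathcomp Require Import boolp classical_sets cardinality.

Set Implicit Arguments.
Unset Strict Implicit.
Unset Printing Implicit Defensive.

Import GRing.Theory.
Local Open Scope ring_scope.

Definition Zk (k : nat) := 'rV[int]_k.

(* Z_m (for m > 0): ordinals 'I_m with modular arithmetic
   ('I_(m.-1.+1) is convertible-equal to 'I_m when m > 0, and carries the
   canonical zmodType structure of Z/mZ). *)
Definition coef (m : nat) := 'I_(m.-1.+1).

(* Elements of the torsion subgroup  (+)_{x in Z^k} (Z_m)_x :
   finitely supported functions Z^k -> Z_m. *)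
Definition lamp (m k : nat) := {fsfun Zk k -> coef m with 0%R}.

Definition mkfs (m k : nat) (S : {fset Zk k}) (h : Zk k -> coef m) : lamp m k :=
  fsfun_of_fun fsfun_key S h (fun _ => 0%R).

Definition lamp0 (m k : nat) : lamp m k := mkfs fset0 (fun _ => 0%R).

Definition lamp_add (m k : nat) (a b : lamp m k) : lamp m k :=
  mkfs (finsupp a `|` finsupp b)%fset (fun x => a x + b x).

Definition lamp_opp (m k : nat) (a : lamp m k) : lamp m k :=
  mkfs (finsupp a) (fun x => - a x).

Definition alpha (m k : nat) (z : Zk k) (a : lamp m k) : lamp m k :=
  mkfs [fset (y + z)%R | y in finsupp a]%fset (fun x => a (x - z)).

(* The restricted wreath product Z_m wr Z^k = (+)_x (Z_m)_x  ><|_alpha  Z^k. *)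
Definition wr (m k : nat) := (lamp m k * Zk k)%type.

Definition wr_mul (m k : nat) (g h : wr m k) : wr m k :=
  (lamp_add g.1 (alpha g.2 h.1), g.2 + h.2).
Definition wr_one (m k : nat) : wr m k := (lamp0 m k, 0).
Definition wr_inv (m k : nat) (g : wr m k) : wr m k :=
  (alpha (- g.2) (lamp_opp g.1), - g.2).

Definition is_aut (m k : nat) (f : wr m k -> wr m k) : Prop :=
  bijective f /\ (forall g h, f (wr_mul g h) = wr_mul (f g) (f h)).

(* phi' : restriction of phi to the (characteristic) torsion subgroup
   {(a, 0)}; its value is the lamp component of phi (a, 0). *)
Definition restr_tors (m k : nat) (f : wr m k -> wr m k) (a : lamp m k) : lamp m k :=
  (f (a, 0)).1.

(* bar phi : induced automorphism of the quotient Z^k = wr / torsion,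
   computed on the coset representative (0, z). *)
Definition induced_quot (m k : nat) (f : wr m k -> wr m k) (z : Zk k) : Zk k :=
  (f (lamp0 m k, z)).2.

Definition red_pi (s : nat) {n k : nat} (a : lamp (s * n) k) : lamp n k :=
  mkfs (finsupp a) (fun x => (inord (val (a x) %% n) : coef n)).

Arguments red_pi s {n k} a.

Definition red_Pi (s : nat) {n k : nat} (g : wr (s * n) k) : wr n k :=
  (red_pi s g.1, g.2).

Definition tconj (m k : nat) (f : wr m k -> wr m k) (g1 g2 : wr m k) : Prop :=
  exists h : wr m k, g1 = wr_mul (wr_mul h g2) (f (wr_inv h)).

(* The set of f-twisted conjugacy classes; R(f) is its cardinal. *)
Definition reid_classes (m k : nat) (f : wr m k -> wr m k) : set (set (wr m k)) :=
  range (fun g0 : wr m k => [set g | tconj f g g0]%classic).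

Arguments red_Pi s {n k} g.

From HB Require Import structures.
From mathcomp Require Import all_boot all_order all_algebra.
From mathcomp Require Import finmap.
From mathcomp Require Import boolp classical_sets cardinality.

Set Implicit Arguments.
Unset Strict Implicit.
Unset Printing Implicit Defensive.

Import GRing.Theory.
Local Open Scope ring_scope.

(* Reducing coefficients mod n gives a surjective homomorphism [red_Pi] with
   a set-theoretic section [lift_wr], whose kernel consists of the n-th powers
   of torsion elements (sigma, 0).  Every endomorphism maps torsion elements to
   torsion elements, because the quotient Z^k is torsion-free; hence it
   preserves this kernel and descends along [red_Pi].  Descending phi and
   phi^-1 gives mutually inverse maps, so psi is an automorphism.  Finally
   [red_Pi] maps phi-twisted classes into psi-twisted classes and is onto, so
   R(psi) <= R(phi). *)

Section Lamps.
Variables m k : nat.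
Implicit Types (a b : lamp m k) (x z : Zk k).

Lemma mkfsE (S : {fset Zk k}) (h : Zk k -> coef m) x :
  mkfs S h x = if x \in S then h x else 0.
Proof. by rewrite /mkfs fsfun_fun. Qed.

Lemma lamp0E x : lamp0 m k x = 0.
Proof. by rewrite /lamp0 mkfsE in_fset0. Qed.

Lemma lamp_addE a b x : lamp_add a b x = a x + b x.
Proof.
rewrite mkfsE in_fsetU; case: ifP => // /norP[/fsfun_dflt -> /fsfun_dflt ->].
by rewrite addr0.
Qed.

Lemma lamp_oppE a x : lamp_opp a x = - a x.
Proof.
by rewrite mkfsE; case: ifP => // /negbT /fsfun_dflt ->; rewrite oppr0.
Qed.

Lemma alphaE z a x : alpha z a x = a (x - z).
Proof.
rewrite mkfsE; case: ifP => // /negP xNS; apply/esym/fsfun_dflt/negP => xz_a.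
by apply: xNS; apply/imfsetP; exists (x - z); rewrite ?subrK.
Qed.

End Lamps.

Section WreathGroup.
Variables m k : nat.
Implicit Types g h l : wr m k.

Lemma wr_ext g h : g.1 =1 h.1 -> g.2 = h.2 -> g = h.
Proof. by case: g h => [a z] [b w] /= /fsfunP -> ->. Qed.

Lemma wr_mulA g h l : wr_mul (wr_mul g h) l = wr_mul g (wr_mul h l).
Proof.
apply: wr_ext => [x|] /=; last by rewrite addrA.
by rewrite !(lamp_addE, alphaE) opprD !addrA.
Qed.

Lemma wr_mul1g g : wr_mul (wr_one m k) g = g.
Proof.
apply: wr_ext => [x|] /=; last by rewrite add0r.
by rewrite lamp_addE lamp0E alphaE subr0 add0r.
Qed.

Lemma wr_mulg1 g : wr_mul g (wr_one m k) = g.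
Proof.
by apply: wr_ext => [x|] /=; rewrite ?addr0 // lamp_addE alphaE lamp0E addr0.
Qed.

Lemma wr_mulVg g : wr_mul (wr_inv g) g = wr_one m k.
Proof.
apply: wr_ext => [x|] /=; last by rewrite addNr.
by rewrite lamp_addE !alphaE lamp_oppE lamp0E opprK addNr.
Qed.

Lemma wr_mulgV g : wr_mul g (wr_inv g) = wr_one m k.
Proof.
apply: wr_ext => [x|] /=; last by rewrite subrr.
by rewrite lamp_addE !alphaE lamp_oppE lamp0E opprK subrK subrr.
Qed.

Lemma wr_mulI g : injective (wr_mul g).
Proof.
by move=> h l gh_gl; rewrite -[h]wr_mul1g -(wr_mulVg g) wr_mulA gh_gl -wr_mulA
  wr_mulVg wr_mul1g.
Qed.

Lemma wr_mul_eq1 g h : wr_mul g h = wr_one m k -> g = wr_inv h.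
Proof.
by move=> gh1; rewrite -[g]wr_mulg1 -(wr_mulgV h) -wr_mulA gh1 wr_mul1g.
Qed.

Lemma wr_inv1 : wr_inv (wr_one m k) = wr_one m k.
Proof. by apply/esym/wr_mul_eq1; rewrite wr_mul1g. Qed.

Lemma wr_invM g h : wr_inv (wr_mul g h) = wr_mul (wr_inv h) (wr_inv g).
Proof.
apply/esym/wr_mul_eq1.
by rewrite wr_mulA -(wr_mulA (wr_inv g)) wr_mulVg wr_mul1g wr_mulVg.
Qed.

Fixpoint wr_exp g j : wr m k :=
  if j is j'.+1 then wr_mul g (wr_exp g j') else wr_one m k.

Lemma wr_exp2 g j : (wr_exp g j).2 = g.2 *+ j.
Proof. by elim: j => //= j ->; rewrite mulrS. Qed.

Lemma wr_exp_tors1 (a : lamp m k) j x : (wr_exp (a, 0) j).1 x = a x *+ j.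
Proof.
elim: j => [|j IHj] /=; first by rewrite lamp0E.
by rewrite lamp_addE alphaE subr0 IHj mulrS.
Qed.

Lemma wr_exp_tors_order (a : lamp m k) : wr_exp (a, 0) m.-1.+1 = wr_one m k.
Proof.
apply: wr_ext => [x|]; last by rewrite wr_exp2 mul0rn.
rewrite wr_exp_tors1 lamp0E; apply: val_inj.
by rewrite /= Zp_mulrn /= modnMl.
Qed.

End WreathGroup.

Definition wr_morphism m1 m2 k (f : wr m1 k -> wr m2 k) :=
  {morph f : g h / wr_mul g h}.

Section Morphisms.
Variables m1 m2 k : nat.
Variable f : wr m1 k -> wr m2 k.
Hypothesis fM : wr_morphism f.

Lemma wr_morph1 : f (wr_one m1 k) = wr_one m2 k.
Proof.
by apply: (@wr_mulI _ _ (f (wr_one m1 k))); rewrite -fM !wr_mulg1.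
Qed.

Lemma wr_morphV g : f (wr_inv g) = wr_inv (f g).
Proof. by apply: wr_mul_eq1; rewrite -fM wr_mulVg wr_morph1. Qed.

Lemma wr_morphX g j : f (wr_exp g j) = wr_exp (f g) j.
Proof. by elim: j => /= [|j <-]; rewrite ?wr_morph1 ?fM. Qed.

Lemma wr_morph_tors (a : lamp m1 k) : (f (a, 0)).2 = 0.
Proof.
have := congr1 f (wr_exp_tors_order a).
rewrite wr_morphX wr_morph1 => /(congr1 snd); rewrite wr_exp2 => fa_tors.
apply/matrixP => i j; move/matrixP/(_ i j)/eqP: fa_tors.
by rewrite /= mulmxnE mxE Num.Theory.mulrn_eq0 => /eqP.
Qed.

End Morphisms.

Section TwistedConjugacy.
Variables m k : nat.
Variable f : wr m k -> wr m k.
Hypothesis fM : wr_morphism f.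

Lemma tconj_refl g : tconj f g g.
Proof.
by exists (wr_one m k); rewrite wr_inv1 wr_morph1 // wr_mul1g wr_mulg1.
Qed.

Lemma tconj_trans g1 g2 g3 : tconj f g1 g2 -> tconj f g2 g3 -> tconj f g1 g3.
Proof.
by case=> h -> [h' ->]; exists (wr_mul h h'); rewrite wr_invM fM !wr_mulA.
Qed.

End TwistedConjugacy.

Section TwistedConjugacyQuotient.
Variables m1 m2 k : nat.
Variable P : wr m1 k -> wr m2 k.
Variables (f1 : wr m1 k -> wr m1 k) (f2 : wr m2 k -> wr m2 k).
Hypotheses (PM : wr_morphism P) (f1M : wr_morphism f1) (f2M : wr_morphism f2).
Hypothesis Pf1 : forall g, P (f1 g) = f2 (P g).

Lemma tconj_morph g g0 : tconj f1 g g0 -> tconj f2 (P g) (P g0).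
Proof. by case=> h ->; exists (P h); rewrite !PM Pf1 wr_morphV. Qed.

(* As P is onto, each f2-class is the f2-saturation of the P-image of an
   f1-class. *)
Lemma reid_classes_le_epi : (forall y, exists x, P x = y) ->
  (reid_classes f2 #<= reid_classes f1)%card.
Proof.
move=> P_onto.
pose img (C : set (wr m1 k)) :=
  [set h | exists2 g, C g & tconj f2 h (P g)]%classic.
suff cover : (reid_classes f2 `<=` img @` reid_classes f1)%classic.
  exact: card_le_trans (subset_card_le cover) (card_image_le _ _).
move=> _ [y _ <-]; case: (P_onto y) => g0 <-.
exists [set g | tconj f1 g g0]%classic; first by exists g0.
apply/seteqP; split => h /=.
- by case=> g /tconj_morph g_g0 h_g; apply: tconj_trans h_g g_g0.
- by exists g0; first exact: tconj_refl.
Qed.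

End TwistedConjugacyQuotient.

Section Reduction.
Variables s n k : nat.
Hypotheses (s_gt0 : (0 < s)%N) (n_gt0 : (0 < n)%N).
Implicit Types (a b : lamp (s * n) k) (g : wr (s * n) k).

Lemma card_coef_sn : (s * n).-1.+1 = (s * n)%N.
Proof. by rewrite prednK // muln_gt0 s_gt0. Qed.

Lemma dvdn_card_coef_sn : (n %| (s * n).-1.+1)%N.
Proof. by rewrite card_coef_sn dvdn_mull. Qed.

Lemma red_piE a x : val (red_pi s a x) = (val (a x) %% n)%N.
Proof.
rewrite mkfsE; case: ifP => [_|/negbT /fsfun_dflt ->]; last by rewrite mod0n.
by apply: inordK; rewrite (leq_trans (ltn_pmod _ n_gt0)) ?leqSpred.
Qed.

Lemma red_pi_add a b :
  red_pi s (lamp_add a b) = lamp_add (red_pi s a) (red_pi s b).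
Proof.
apply/fsfunP => x; apply: val_inj.
rewrite red_piE !lamp_addE /= !red_piE (prednK n_gt0) modnDm.
by rewrite modn_dvdm // dvdn_card_coef_sn.
Qed.

Lemma red_pi_alpha z a : red_pi s (alpha z a) = alpha z (red_pi s a).
Proof.
by apply/fsfunP => x; apply: val_inj; rewrite red_piE !alphaE red_piE.
Qed.

Lemma red_pi0 : red_pi s (lamp0 (s * n) k) = lamp0 n k.
Proof. by apply/fsfunP => x; apply: val_inj; rewrite red_piE !lamp0E mod0n. Qed.

Lemma red_Pi_morph : wr_morphism (red_Pi s : wr (s * n) k -> wr n k).
Proof. by move=> g h; rewrite /red_Pi /= red_pi_add red_pi_alpha. Qed.

Definition lift_lamp (a : lamp n k) : lamp (s * n) k :=
  mkfs (finsupp a) (fun x => inord (val (a x))).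

Definition lift_wr (x : wr n k) : wr (s * n) k := (lift_lamp x.1, x.2).

Lemma lift_lampE (a : lamp n k) x : val (lift_lamp a x) = val (a x).
Proof.
rewrite mkfsE; case: ifP => [_|/negbT /fsfun_dflt -> //].
apply: inordK; rewrite card_coef_sn (leq_trans (ltn_ord _)) // (prednK n_gt0).
by rewrite leq_pmull.
Qed.

Lemma lift_wrK : cancel lift_wr (red_Pi s).
Proof.
case=> a z; congr (_, _); apply/fsfunP => x; apply: val_inj.
rewrite red_piE lift_lampE modn_small //.
exact: leq_trans (ltn_ord _) (eq_leq (prednK n_gt0)).
Qed.

Lemma coef_sub_dvdn (u v : coef (s * n)) :
  (val u = val v %[mod n])%N -> (n %| val (u - v)%R)%N.
Proof.
have n_dvd_N := dvdn_card_coef_sn.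
move=> uv_mod; rewrite /= /dvdn modn_dvdm // -modnDmr modn_dvdm // modnDmr.
by rewrite -modnDml uv_mod modnDml subnKC ?(ltnW (ltn_ord v)).
Qed.

Lemma coef_divnK (u : coef (s * n)) :
  (n %| val u)%N -> (inord (val u %/ n) : coef (s * n)) *+ n = u.
Proof.
move=> n_dvd_u; apply: val_inj; rewrite /= Zp_mulrn /= inordK.
  by rewrite divnK // modn_small.
exact: leq_ltn_trans (leq_div _ _) (ltn_ord u).
Qed.

Lemma red_Pi_eq_exp g1 g2 :
  red_Pi s g1 = red_Pi s g2 -> exists a, g1 = wr_mul (wr_exp (a, 0) n) g2.
Proof.
case: g1 g2 => [b1 z1] [b2 z2] [/fsfunP red_b12 <-].
pose d := lamp_add b1 (lamp_opp b2).
have n_dvd_d x : (n %| val (d x))%N.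
  by rewrite lamp_addE lamp_oppE coef_sub_dvdn // -!red_piE red_b12.
exists (mkfs (finsupp d) (fun x => inord (val (d x) %/ n))).
apply: wr_ext => [x|] /=; last by rewrite wr_exp2 mul0rn add0r.
have -> : b1 x = d x + b2 x by rewrite lamp_addE lamp_oppE subrK.
rewrite lamp_addE wr_exp2 mul0rn alphaE subr0 wr_exp_tors1 mkfsE.
by case: ifP => [_|/negbT/fsfun_dflt ->]; rewrite ?coef_divnK ?mul0rn.
Qed.

Lemma red_Pi_exp_tors (a : lamp (s * n) k) :
  red_Pi s (wr_exp (a, 0) n) = wr_one n k.
Proof.
apply: wr_ext => [x|] /=; last by rewrite wr_exp2 mul0rn.
apply: val_inj; rewrite red_piE wr_exp_tors1 lamp0E /= Zp_mulrn /=.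
by rewrite modn_dvdm ?dvdn_card_coef_sn // modnMl.
Qed.

Lemma red_Pi_eq_morph (f : wr (s * n) k -> wr (s * n) k) g1 g2 :
  wr_morphism f ->
  red_Pi s g1 = red_Pi s g2 -> red_Pi s (f g1) = red_Pi s (f g2).
Proof.
move=> fM /red_Pi_eq_exp[a ->]; rewrite fM wr_morphX // red_Pi_morph.
have -> : f (a, 0) = ((f (a, 0)).1, 0).
  by move: (wr_morph_tors fM a); case: (f _) => ? ? /= ->.
by rewrite red_Pi_exp_tors wr_mul1g.
Qed.

End Reduction.

Section Descent.
Variables s n k : nat.
Hypotheses (s_gt0 : (0 < s)%N) (n_gt0 : (0 < n)%N).

Definition descend (f : wr (s * n) k -> wr (s * n) k) (x : wr n k) : wr n k :=
  red_Pi s (f (lift_wr s x)).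

Section DescendMorphism.
Variable f : wr (s * n) k -> wr (s * n) k.
Hypothesis fM : wr_morphism f.

Lemma red_Pi_descend g : red_Pi s (f g) = descend f (red_Pi s g).
Proof. by apply: red_Pi_eq_morph; rewrite ?lift_wrK. Qed.

Lemma descend_morph : wr_morphism (descend f).
Proof.
move=> x y; rewrite -[x](lift_wrK s_gt0 n_gt0) -[y](lift_wrK s_gt0 n_gt0).
by rewrite -(red_Pi_morph s_gt0 n_gt0) -!red_Pi_descend fM red_Pi_morph.
Qed.

End DescendMorphism.

Lemma descend_aut f : is_aut f -> is_aut (descend f).
Proof.
case=> -[fV fK fVK] fM.
have fVM : wr_morphism fV by move=> g h; apply: (can_inj fK); rewrite fM !fVK.
split; last exact: descend_morph.
by exists (descend fV) => x; rewrite -[x](lift_wrK s_gt0 n_gt0)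
  -!red_Pi_descend ?fK ?fVK.
Qed.

End Descent.
Arguments descend s {n k} f x.

Theorem theorem3p2 (s n k : nat) (s_gt0 : (0 < s)%N) (n_gt0 : (0 < n)%N)
    (k_gt0 : (0 < k)%N)
    (phi : wr (s * n) k -> wr (s * n) k) (phi_aut : is_aut phi) :
  exists psi : wr n k -> wr n k,
    [/\ is_aut psi,
        (forall g, red_Pi s (phi g) = psi (red_Pi s g)),
        (forall a, red_pi s (restr_tors phi a) = restr_tors psi (red_pi s a)),
        (forall z, induced_quot phi z = induced_quot psi z)
      & (reid_classes psi #<= reid_classes phi)%card].
Proof.
have phiM : wr_morphism phi := phi_aut.2.
have Pi_phi := red_Pi_descend s_gt0 n_gt0 phiM.
exists (descend s phi); split.
- exact: descend_aut.
- exact: Pi_phi.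
- by move=> a; have := congr1 fst (Pi_phi (a, 0)).
- move=> z; have := congr1 snd (Pi_phi (lamp0 _ _, z)).
  by rewrite /red_Pi /= red_pi0.
- apply: (reid_classes_le_epi (red_Pi_morph s_gt0 n_gt0) phiM
    (descend_morph s_gt0 n_gt0 phiM) Pi_phi).
  by move=> y; exists (lift_wr s y); rewrite (lift_wrK s_gt0 n_gt0).
Qed.
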